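(* Let $(Q,P)$ be a weakly quasi-lattice ordered group and let $\Lambda$ be a $P$-graph with $\mathrm{FA}(\Lambda)\neq\emptyset$. Let $\lambda,\lambda'\in\Lambda$ with $s(\lambda)=r(\lambda')$. Then the left-shift map $Z(\lambda)\to Z(s(\lambda))$, $x\mapsto\lambda^*\cdot x$, is a continuous bijection whose inverse is the right-shift map $Z(s(\lambda))\to Z(\lambda)$, $x\mapsto\lambda\cdot x$; moreover $\{\lambda^*\cdot x: x\in Z(\lambda\lambda')\}=Z(\lambda')$.
   Context: $(Q,P)$ weakly quasi-lattice ordered: $Q$ a discrete group, $P\subseteq Q$ a subsemigroup containing the identity $e$ with $P\cap P^{-1}=\{e\}$, and, with $p\le r$ meaning $pq=r$ for some $q\in P$, any two elements of $P$ with a common upper bound have a least common upper bound. A $P$-graph is a countable small category $\Lambda$ (identities $\Lambda^{(0)}$, range/source $r,s$) with a functor $d:\Lambda\to P$ with unique factorisation (if $d(\lambda)=pq$ there are unique $\mu,\nu$ with $\lambda=\mu\nu$, $d(\mu)=p$, $d(\nu)=q$). Write $\lambda\Lambda=\{\lambda\mu: s(\lambda)=r(\mu)\}$, $\mu\preceq\lambda$ iff $\lambda\in\mu\Lambda$. $\mathrm{FA}(\Lambda)$ is the set of $\lambda$ such that for all $\mu\in\lambda\Lambda,\nu\in\Lambda$ there is finite $J\subseteq\Lambda$ with $\mu\Lambda\cap\nu\Lambda=\bigcup_{\kappa\in J}\kappa\Lambda$. A filter is a nonempty hereditary and directed subset of $\Lambda$ (w.r.t. $\preceq$); $\mathcal{F}(\Lambda)$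 is the set of filters, topologised as a subspace of $\mathcal{P}(\Lambda)\cong\{0,1\}^\Lambda$ with the product topology (basis $\{x: K_1\subseteq x\subseteq\Lambda\setminus K_2\}$, $K_1,K_2$ finite). For $\mu\in\Lambda$, $Z(\mu)=\{x\in\mathcal{F}(\Lambda):\mu\in x\}$ with the subspace topology. For $x\in Z(\lambda)$, $\lambda^*\cdot x=\{\mu\in\Lambda:\lambda\mu\in x\}$ (a filter in $Z(s(\lambda))$), and for $x\in Z(s(\lambda))$, $\lambda\cdot x=\{\zeta\in\Lambda:\zeta\preceq\lambda\mu\text{ for some }\mu\in x\}$ (a filter in $Z(\lambda)$). *)

From Stdlib Require Import List.
Import ListNotations.
Set Implicit Arguments.

Record WQLOGroup := {
  Q : Type;
  mul : Q -> Q -> Q;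
  inv : Q -> Q;
  e : Q;
  mul_assoc : forall a b c, mul a (mul b c) = mul (mul a b) c;
  mul_e_l : forall a, mul e a = a;
  mul_e_r : forall a, mul a e = a;
  mul_inv_l : forall a, mul (inv a) a = e;
  mul_inv_r : forall a, mul a (inv a) = e;
  P : Q -> Prop;
  P_e : P e;
  P_mul : forall a b, P a -> P b -> P (mul a b);
  P_cap : forall a, P a -> P (inv a) -> a = e;
  wqlo : forall p q, P p -> P q ->
    (exists r, P r /\ (exists a, P a /\ mul p a = r) /\ (exists b, P b /\ mul q b = r)) ->
    exists l, P l /\ (exists a, P a /\ mul p a = l) /\ (exists b, P b /\ mul q b = l) /\
      forall r, P r -> (exists a, P a /\ mul p a = r) -> (exists b, P b /\ mul q b = r) ->
        exists c, P c /\ mul l c = r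
}.

(** Objects form the type [V]; the identity
    morphism at [v] is [idm v]; [comp a b] is the composite [ab] (meaningful when
    [s a = r b]). *)
Record PGraph (G : WQLOGroup) := {
  V : Type;
  L : Type;
  rg : L -> V;
  sc : L -> V;
  idm : V -> L;
  comp : L -> L -> L;
  d : L -> Q G;
  rg_idm : forall v, rg (idm v) = v;
  sc_idm : forall v, sc (idm v) = v;
  rg_comp : forall a b, sc a = rg b -> rg (comp a b) = rg a;
  sc_comp : forall a b, sc a = rg b -> sc (comp a b) = sc b;
  comp_idm_l : forall a, comp (idm (rg a)) a = a;
  comp_idm_r : forall a, comp a (idm (sc a)) = a;
  comp_assoc : forall a b c, sc a = rg b -> sc b = rg c ->
    comp a (comp b c) = comp (comp a b) c;
  d_P : forall a, P G (d a);
  d_idm : forall v, d (idm v) = e G;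
  d_comp : forall a b, sc a = rg b -> d (comp a b) = mul G (d a) (d b);
  unique_fact : forall a p q, P G p -> P G q -> d a = mul G p q ->
    exists m n, sc m = rg n /\ a = comp m n /\ d m = p /\ d n = q /\
      forall m' n', sc m' = rg n' -> a = comp m' n' -> d m' = p -> d n' = q ->
        m' = m /\ n' = n;
  countable_L : exists f : L -> nat, forall a b, f a = f b -> a = b
}.

Section Defs.
Context {G : WQLOGroup} (Λ : PGraph G).

Local Notation L := (L Λ).

Definition in_path_set (a b : L) : Prop :=
  exists m, sc Λ a = rg Λ m /\ b = comp Λ a m.

Definition preceq (m l : L) : Prop := in_path_set m l.

Definition FA (l : L) : Prop :=
  forall m n, in_path_set l m ->
    exists J : list L, forall k,
      (in_path_set m k /\ in_path_set n k) <-> exists j, In j J /\ in_path_set j k.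

Definition FA_nonempty : Prop := exists l, FA l.

Definition is_filter (x : L -> Prop) : Prop :=
  (exists l, x l) /\
  (forall l m, x l -> preceq m l -> x m) /\
  (forall l m, x l -> x m -> exists n, x n /\ preceq l n /\ preceq m n).

Definition Zset (m : L) (x : L -> Prop) : Prop := is_filter x /\ x m.

Definition set_eq (x y : L -> Prop) : Prop := forall a, x a <-> y a.

Definition lshift (l : L) (x : L -> Prop) : L -> Prop :=
  fun m => sc Λ l = rg Λ m /\ x (comp Λ l m).

Definition rshift (l : L) (x : L -> Prop) : L -> Prop :=
  fun z => exists m, x m /\ sc Λ l = rg Λ m /\ preceq z (comp Λ l m).

(** Basic open sets of P(Λ) ≅ {0,1}^Λ (product topology):
    {x : K1 ⊆ x ⊆ Λ \ K2}, K1, K2 finite. *)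
Definition basic (K1 K2 : list L) (x : L -> Prop) : Prop :=
  (forall k, In k K1 -> x k) /\ (forall k, In k K2 -> ~ x k).

(** Continuity of f : D -> C, where D, C ⊆ P(Λ) carry the subspace topology
    of the product topology (stated via the basis of basic open sets):
    for each x ∈ D and each basic open U of P(Λ) containing f x there is a
    basic open U' containing x with f (U' ∩ D) ⊆ U. *)
Definition continuous_on (D : (L -> Prop) -> Prop) (f : (L -> Prop) -> (L -> Prop)) : Prop :=
  forall x, D x -> forall K1 K2, basic K1 K2 (f x) ->
    exists K1' K2', basic K1' K2' x /\
      forall y, D y -> basic K1' K2' y -> basic K1 K2 (f y).

End Defs.

From Stdlib Require Import List Classical.
Import ListNotations.

(* Left cancellation [λμ = λν -> μ = ν] is the one place where unique
   factorisation enters: both sides factor with degrees [(d λ, d μ)], so the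
   second factors agree.  With it, [λ^*·_] and [λ·_] are inverse on filters:
   a filter through [λ] consists of prefixes of paths [λμ], and stripping or
   re-attaching [λ] preserves heredity and directedness.  Continuity holds
   because [μ ∈ λ^*·x] only depends on whether [λμ ∈ x]. *)

Lemma exists_sublist_outside {A : Type} (p : A -> Prop) (K : list A) :
  exists K', (forall j, In j K' -> ~ p j) /\ (forall k, In k K -> p k \/ In k K').
Proof.
  induction K as [|a K [K' [HK' HK]]].
  - exists []. split; intros ? [].
  - destruct (classic (p a)) as [Ha|Ha].
    + exists K'. split; auto. intros k [<-|Hk]; auto.
    + exists (a :: K'). split.
      * intros j [<-|Hj]; auto.
      * intros k [<-|Hk]; simpl; auto. destruct (HK k Hk); auto.
Qed.

Section Shifts.
Variable G : WQLOGroup.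
Variable Λ : PGraph G.

Lemma mul_cancel_l (a b c : Q G) : mul G a b = mul G a c -> b = c.
Proof.
  intro H. rewrite <- (mul_e_l G b), <- (mul_e_l G c), <- (mul_inv_l G a),
    <- !mul_assoc, H. reflexivity.
Qed.

Lemma comp_cancel_l {l a b : L Λ} : sc Λ l = rg Λ a -> sc Λ l = rg Λ b ->
  comp Λ l a = comp Λ l b -> a = b.
Proof.
  intros Ha Hb Hab.
  destruct (unique_fact Λ (comp Λ l a) (d Λ l) (d Λ a) (d_P Λ l) (d_P Λ a)
    (d_comp Λ l a Ha)) as [m [n [_ [_ [_ [_ Huniq]]]]]].
  assert (Hd : d Λ b = d Λ a).
  { apply (mul_cancel_l (d Λ l)).
    rewrite <- (d_comp Λ l b Hb), <- (d_comp Λ l a Ha), Hab. reflexivity. }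
  destruct (Huniq l a Ha eq_refl eq_refl eq_refl) as [_ ->].
  destruct (Huniq l b Hb Hab eq_refl Hd) as [_ ->].
  reflexivity.
Qed.

Lemma preceq_refl (a : L Λ) : preceq Λ a a.
Proof.
  exists (idm Λ (sc Λ a)). rewrite rg_idm, comp_idm_r. auto.
Qed.

Lemma preceq_trans (a b c : L Λ) : preceq Λ a b -> preceq Λ b c -> preceq Λ a c.
Proof.
  intros [m [Hm ->]] [n [Hn ->]]. rewrite sc_comp in Hn by auto.
  exists (comp Λ m n). rewrite rg_comp, comp_assoc by auto. auto.
Qed.

Lemma preceq_comp (a b : L Λ) : sc Λ a = rg Λ b -> preceq Λ a (comp Λ a b).
Proof. intros Hab. exists b. auto. Qed.

Lemma preceq_idm_rg (a : L Λ) : preceq Λ (idm Λ (rg Λ a)) a.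
Proof.
  exists a. rewrite sc_idm, comp_idm_l. auto.
Qed.

Lemma rg_preceq {a b : L Λ} : preceq Λ a b -> rg Λ b = rg Λ a.
Proof. intros [m [Hm ->]]. apply rg_comp; auto. Qed.

Lemma preceq_comp_l (l a b : L Λ) : sc Λ l = rg Λ a ->
  preceq Λ a b -> preceq Λ (comp Λ l a) (comp Λ l b).
Proof.
  intros Ha [k [Hk ->]]. exists k. rewrite sc_comp, comp_assoc by auto. auto.
Qed.

Lemma preceq_comp_lE {l a z : L Λ} : sc Λ l = rg Λ a ->
  preceq Λ (comp Λ l a) z ->
  exists w, sc Λ l = rg Λ w /\ z = comp Λ l w /\ preceq Λ a w.
Proof.
  intros Ha [k [Hk ->]]. rewrite sc_comp in Hk by auto.
  exists (comp Λ a k). rewrite rg_comp, comp_assoc by auto.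
  repeat split; auto. exists k. auto.
Qed.

Lemma filter_down {x : L Λ -> Prop} {a b : L Λ} :
  is_filter Λ x -> x a -> preceq Λ b a -> x b.
Proof. intros [_ [Hdown _]]. apply Hdown. Qed.

Lemma filter_directed {x : L Λ -> Prop} {a b : L Λ} :
  is_filter Λ x -> x a -> x b ->
  exists c, x c /\ preceq Λ a c /\ preceq Λ b c.
Proof. intros [_ [_ Hdir]]. apply Hdir. Qed.

Lemma filter_rg {x : L Λ -> Prop} {a b : L Λ} :
  is_filter Λ x -> x a -> x b -> rg Λ a = rg Λ b.
Proof.
  intros Hx Ha Hb. destruct (filter_directed Hx Ha Hb) as [c [_ [Hac Hbc]]].
  rewrite <- (rg_preceq Hac). apply rg_preceq; auto.
Qed.

Lemma filter_ext {x y : L Λ -> Prop} : set_eq Λ x y -> is_filter Λ x -> is_filter Λ y.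
Proof.
  intros E Hx. split; [|split].
  - destruct Hx as [[a Ha] _]. exists a. apply E; auto.
  - intros a b Ha Hba. apply E. apply (filter_down Hx (a := a)); auto. apply E; auto.
  - intros a b Ha Hb.
    destruct (filter_directed Hx (a := a) (b := b)) as [c [Hc Habc]]; try apply E; auto.
    exists c. split; auto. apply E; auto.
Qed.

Lemma Zset_preceq {a b : L Λ} {x : L Λ -> Prop} :
  Zset Λ a x -> preceq Λ b a -> Zset Λ b x.
Proof. intros [Hx Ha] Hba. split; auto. apply (filter_down Hx Ha Hba). Qed.

Lemma rshift_comp (l m : L Λ) (y : L Λ -> Prop) :
  y m -> sc Λ l = rg Λ m -> rshift Λ l y (comp Λ l m).
Proof. intros Hm Hlm. exists m. auto using preceq_refl. Qed.

Lemma lshift_Zset (l : L Λ) (x : L Λ -> Prop) :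
  Zset Λ l x -> Zset Λ (idm Λ (sc Λ l)) (lshift Λ l x).
Proof.
  intros [Hx Hl].
  assert (Hidm : lshift Λ l x (idm Λ (sc Λ l))).
  { split; [rewrite rg_idm | rewrite comp_idm_r]; auto. }
  split; [split; [|split]|]; auto.
  - exists (idm Λ (sc Λ l)). auto.
  - intros a b [Ha Hxa] Hba. rewrite (rg_preceq Hba) in Ha. split; auto.
    apply (filter_down Hx Hxa). apply preceq_comp_l; auto.
  - intros a b [Ha Hxa] [Hb Hxb].
    destruct (filter_directed Hx Hxa Hxb) as [z [Hz [Haz Hbz]]].
    destruct (preceq_comp_lE Ha Haz) as [w [Hw [-> Haw]]].
    destruct (preceq_comp_lE Hb Hbz) as [w' [Hw' [Ew' Hbw']]].
    rewrite <- (comp_cancel_l Hw Hw' Ew') in Hbw'.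
    exists w. split; [split|]; auto.
Qed.

Lemma rshift_Zset (l : L Λ) (y : L Λ -> Prop) :
  Zset Λ (idm Λ (sc Λ l)) y -> Zset Λ l (rshift Λ l y).
Proof.
  intros [Hy Hidm].
  assert (Hl : rshift Λ l y l).
  { rewrite <- (comp_idm_r Λ l) at 2. apply rshift_comp; auto. rewrite rg_idm; auto. }
  split; [split; [|split]|]; auto.
  - exists l. auto.
  - intros a b [m [Hm [Hlm Ham]]] Hba. exists m. eauto using preceq_trans.
  - intros a b [m1 [Hm1 [Hlm1 Ha]]] [m2 [Hm2 [Hlm2 Hb]]].
    destruct (filter_directed Hy Hm1 Hm2) as [n [Hn [Hmn1 Hmn2]]].
    assert (Hln : sc Λ l = rg Λ n) by (rewrite (rg_preceq Hmn1); auto).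
    exists (comp Λ l n). split; [apply rshift_comp; auto|].
    split; eapply preceq_trans; eauto using preceq_comp_l.
Qed.

Lemma rshift_lshift (l : L Λ) (x : L Λ -> Prop) :
  Zset Λ l x -> set_eq Λ (rshift Λ l (lshift Λ l x)) x.
Proof.
  intros [Hx Hl] z. split.
  - intros [m [[_ Hxm] [_ Hzm]]]. apply (filter_down Hx Hxm Hzm).
  - intros Hz. destruct (filter_directed Hx Hz Hl) as [w [Hw [Hzw [k [Hk ->]]]]].
    exists k. repeat split; auto.
Qed.

Lemma lshift_rshift (l : L Λ) (y : L Λ -> Prop) :
  Zset Λ (idm Λ (sc Λ l)) y -> set_eq Λ (lshift Λ l (rshift Λ l y)) y.
Proof.
  intros [Hy Hidm] m. split.
  - intros [Hlm [n [Hn [Hln Hmn]]]].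
    destruct (preceq_comp_lE Hlm Hmn) as [w [Hw [Enw Hmw]]].
    rewrite <- (comp_cancel_l Hln Hw Enw) in Hmw.
    apply (filter_down Hy Hn Hmw).
  - intros Hm.
    assert (Hlm : sc Λ l = rg Λ m).
    { rewrite <- (filter_rg Hy Hidm Hm), rg_idm. reflexivity. }
    split; auto. apply rshift_comp; auto.
Qed.

Lemma lshift_continuous (l : L Λ) : continuous_on Λ (Zset Λ l) (lshift Λ l).
Proof.
  intros x _ K1 K2 [HK1 HK2].
  destruct (exists_sublist_outside x (map (comp Λ l) K2)) as [K2' [HK2' Hsplit]].
  exists (map (comp Λ l) K1), K2'. split; [split|].
  - intros j Hj. apply in_map_iff in Hj as [k [<- Hk]]. apply HK1; auto.
  - auto.
  - intros y _ [Hy1 Hy2]. split.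
    + intros k Hk. split; [apply (HK1 k Hk)|]. apply Hy1, in_map; auto.
    + intros k Hk [Hlk Hyk].
      destruct (Hsplit (comp Λ l k)) as [Hxk|Hin]; [apply in_map; auto| |].
      * apply (HK2 k Hk). split; auto.
      * apply (Hy2 _ Hin Hyk).
Qed.

Lemma lshift_image_Zset_comp (l l' : L Λ) (y : L Λ -> Prop) : sc Λ l = rg Λ l' ->
  Zset Λ l' y <-> exists x, Zset Λ (comp Λ l l') x /\ set_eq Λ (lshift Λ l x) y.
Proof.
  intros Hll'. split.
  - intros Hy.
    assert (Hidm : Zset Λ (idm Λ (sc Λ l)) y).
    { rewrite Hll'. apply (Zset_preceq Hy), preceq_idm_rg. }
    exists (rshift Λ l y). split; [|apply lshift_rshift; auto].
    split; [apply rshift_Zset; auto|]. apply rshift_comp; auto. apply Hy.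
  - intros [x [[Hx Hxll'] E]].
    assert (Hxl : Zset Λ l x) by (split; auto; apply (filter_down Hx Hxll'), preceq_comp; auto).
    split.
    + apply (filter_ext E). apply lshift_Zset; auto.
    + apply E. split; auto.
Qed.

End Shifts.

Theorem lemma5p3 (G : WQLOGroup) (Λ : PGraph G) (l l' : L Λ) :
  FA_nonempty Λ ->
  sc Λ l = rg Λ l' ->
  (* the left shift maps Z(λ) into Z(s(λ)) *)
  (forall x, Zset Λ l x -> Zset Λ (idm Λ (sc Λ l)) (lshift Λ l x)) /\
  (* the right shift maps Z(s(λ)) into Z(λ) *)
  (forall y, Zset Λ (idm Λ (sc Λ l)) y -> Zset Λ l (rshift Λ l y)) /\
  (* they are mutually inverse (hence the left shift is a bijection) *)
  (forall x, Zset Λ l x -> set_eq Λ (rshift Λ l (lshift Λ l x)) x) /\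
  (forall y, Zset Λ (idm Λ (sc Λ l)) y -> set_eq Λ (lshift Λ l (rshift Λ l y)) y) /\
  (* the left shift is continuous on Z(λ) *)
  continuous_on Λ (Zset Λ l) (lshift Λ l) /\
  (* {λ^*·x : x ∈ Z(λλ')} = Z(λ') *)
  (forall y, Zset Λ l' y <->
     exists x, Zset Λ (comp Λ l l') x /\ set_eq Λ (lshift Λ l x) y).
Proof.
  intros _ Hll'.
  split; [|split; [|split; [|split; [|split]]]].
  - apply lshift_Zset.
  - apply rshift_Zset.
  - apply rshift_lshift.
  - apply lshift_rshift.
  - apply lshift_continuous.
  - intros y. apply lshift_image_Zset_comp; auto.
Qed.
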